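(* For any positive increasing function $\phi$ with $\phi(X)\to\infty$ as $X\to\infty$, there exists a set $A\subset\mathbb{N}$ such that the set $A^2+A$ has density $1$ and $$\liminf_{X\to\infty} \frac{A(X)}{(X\phi(X))^{1/3}}<\infty.$$
   Context: $\mathbb{N}$ is the set of positive integers. $A^2=\{ab: a,b\in A\}$, $A^2+A=\{x+y: x\in A^2, y\in A\}$. For a set $S$ of nonnegative integers, $S(X)=|S\cap[1,X]|$; $S$ has density $1$ if $\lim_{X\to\infty} S(X)/X = 1$. *)

From Stdlib Require Import Reals Lra Lia ZArith ClassicalEpsilon.
From Coquelicot Require Import Coquelicot.
Open Scope R_scope.

Definition prodset (A : nat -> Prop) : nat -> Prop :=
  fun n => exists a b, A a /\ A b /\ n = (a * b)%nat.

Definition prodsumset (A : nat -> Prop) : nat -> Prop :=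
  fun n => exists x y, prodset A x /\ A y /\ n = (x + y)%nat.

Fixpoint count_upto (S : nat -> Prop) (N : nat) : nat :=
  match N with
  | O => O
  | Datatypes.S k => (count_upto S k +
             (if excluded_middle_informative (S (Datatypes.S k)) then 1 else 0))%nat
  end.

Definition counting (S : nat -> Prop) (X : R) : R :=
  INR (count_upto S (Z.to_nat (Int_part X))).

Definition has_density_one (S : nat -> Prop) : Prop :=
  is_lim (fun X => counting S X / X) p_infty 1.

(* A is built in stages.  At stage k, with K = 2^(e_k) and W = W_k (so that
   K = 4 W^2 and W_(k+1) = K^3), A contains the interval (W, 4K] and the blocks
   [K 2^j, K 2^j + 2^j) for j <= e_k: about 6K elements up to K^3.  Every t in
   (W + 1, K^3 + 1] is a b + c with c in (W, W + 2K]: small t as 1 * 1 + (t - 1),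
   t up to W + 2K^2 with a in [m, 2m] and b = m in the interval, larger t with
   a in [K, 2K] and b in a block.  So A^2 + A contains every integer > 3 while
   A(K^3) <= 6K + 1.  Since phi is increasing, (X phi(X))^(1/3) >=
   phi(0)^(1/3) X^(1/3) for X >= 0, so the ratio is at most 7 / phi(0)^(1/3) at
   every X = K^3. *)

From Stdlib Require Import Reals Lra Lia ZArith ClassicalEpsilon.
From Coquelicot Require Import Coquelicot.

Open Scope nat_scope.

Lemma prodsumset_block (A : nat -> Prop) c K M t :
  1 <= K -> 1 <= M ->
  (forall a, K <= a <= 2 * K -> A a) ->
  (forall b, M <= b -> K * (b - M) < M -> A b) ->
  (forall c', c < c' <= c + 2 * K -> A c') ->
  c + K * M < t <= c + 2 * K * M -> prodsumset A t.
Proof.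
  intros HK HM HA HB HC Ht.
  (* t - c - 1 = a b + r with a = (t - c - 1) / M in [K, 2K) and r < a. *)
  set (s := t - c - 1).
  set (a := s / M).
  assert (Ha : K <= a < 2 * K).
  { split; [apply Nat.div_le_lower_bound | apply Nat.Div0.div_lt_upper_bound]; unfold s; lia. }
  assert (HaM : a * M <= s < a * M + M).
  { pose proof (Nat.div_mod_eq s M) as E. pose proof (Nat.mod_upper_bound s M) as Em.
    fold a in E, Em. lia. }
  set (b := s / a). set (r := s mod a).
  assert (Hs : s = a * b + r) by apply Nat.div_mod_eq.
  assert (Hr : r < a) by (apply Nat.mod_upper_bound; lia).
  assert (Hb : M <= b) by nia.
  exists (a * b), (c + 1 + r); repeat split.
  - exists a, b; repeat split; [apply HA; lia | apply HB; nia].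
  - apply HC; lia.
  - unfold s in Hs; lia.
Qed.

Lemma interval_chain (P : nat -> Prop) (lo hi : nat -> nat) n :
  (forall i, i < n -> lo (S i) <= hi i) ->
  (forall i t, i <= n -> lo i < t <= hi i -> P t) ->
  forall t, lo 0 < t <= hi n -> P t.
Proof.
  induction n as [|n IH]; intros Hlink Hcov t Ht.
  - exact (Hcov 0 t (le_n 0) Ht).
  - destruct (Nat.le_gt_cases t (lo (S n))).
    + pose proof (Hlink n (Nat.lt_succ_diag_r n)).
      apply IH; [intros; apply Hlink | intros; apply (Hcov i) | ]; lia.
    + apply (Hcov (S n)); lia.
Qed.

Lemma count_upto_mono (P Q : nat -> Prop) N :
  (forall n, 1 <= n <= N -> P n -> Q n) -> count_upto P N <= count_upto Q N.
Proof.
  induction N as [|N IH]; intros H; cbn [count_upto]; [lia|].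
  assert (count_upto P N <= count_upto Q N) by (apply IH; intros; apply H; [lia|auto]).
  destruct (excluded_middle_informative (P (S N))) as [HP|];
  destruct (excluded_middle_informative (Q (S N))) as [|HQ]; try lia.
  exfalso. apply HQ, H; [lia | exact HP].
Qed.

Lemma count_upto_union (P Q : nat -> Prop) N :
  count_upto (fun n => P n \/ Q n) N <= count_upto P N + count_upto Q N.
Proof.
  induction N as [|N IH]; cbn [count_upto]; [lia|].
  destruct (excluded_middle_informative (P (S N) \/ Q (S N)));
  destruct (excluded_middle_informative (P (S N)));
  destruct (excluded_middle_informative (Q (S N))); first [lia | tauto].
Qed.

Lemma count_upto_interval a b N : count_upto (fun n => a <= n < b) N <= b - a.
Proof.
  enough (count_upto (fun n => a <= n < b) N <= N + 1 - a /\
          count_upto (fun n => a <= n < b) N <= b - a) as [_ H] by exact H.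
  induction N as [|N IH]; cbn [count_upto]; [lia|].
  destruct (excluded_middle_informative (a <= S N < b)); lia.
Qed.

Lemma count_upto_le (P : nat -> Prop) N : count_upto P N <= N.
Proof.
  induction N as [|N IH]; cbn [count_upto]; [lia|].
  destruct (excluded_middle_informative (P (S N))); lia.
Qed.

Lemma count_upto_cofinite (P : nat -> Prop) m N :
  (forall n, m < n <= N -> P n) -> N <= count_upto P N + m.
Proof.
  induction N as [|N IH]; intros H; cbn [count_upto]; [lia|].
  assert (N <= count_upto P N + m) by (apply IH; intros; apply H; lia).
  destruct (excluded_middle_informative (P (S N))) as [|HP]; [lia|].
  destruct (Nat.le_gt_cases (S N) m); [lia|].
  exfalso. apply HP, H. lia.
Qed.

Lemma count_upto_dyadic_blocks (lo : nat -> nat) e N :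
  count_upto (fun n => exists j, j <= e /\ lo j <= n < lo j + 2 ^ j) N <= 2 ^ S e.
Proof.
  induction e as [|e IH].
  - transitivity (count_upto (fun n => lo 0 <= n < lo 0 + 2 ^ 0) N).
    + apply count_upto_mono. intros n _ [j [Hj Hn]].
      assert (j = 0) as -> by lia. exact Hn.
    + pose proof (count_upto_interval (lo 0) (lo 0 + 2 ^ 0) N). cbn [Nat.pow] in *. lia.
  - eapply Nat.le_trans.
    { apply (count_upto_mono _
        (fun n => (exists j, j <= e /\ lo j <= n < lo j + 2 ^ j) \/
                  lo (S e) <= n < lo (S e) + 2 ^ S e)).
      intros n _ [j [Hj Hn]].
      destruct (Nat.le_gt_cases j e); [left; exists j; auto|].
      right. replace (S e) with j by lia. exact Hn. }
    eapply Nat.le_trans; [apply count_upto_union|].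
    pose proof (count_upto_interval (lo (S e)) (lo (S e) + 2 ^ S e) N).
    rewrite (Nat.pow_succ_r' 2 (S e)). lia.
Qed.

Lemma le_cube n : n <= n ^ 3.
Proof. destruct n; simpl; nia. Qed.

Fixpoint stage_log (k : nat) : nat :=
  match k with O => 4 | S k => 6 * stage_log k + 2 end.

Definition stage_scale (k : nat) : nat := 2 ^ stage_log k.

Definition stage_start (k : nat) : nat :=
  match k with O => 2 | S k => stage_scale k ^ 3 end.

Definition stage_blocks (k : nat) (n : nat) : Prop :=
  exists j, j <= stage_log k /\
    stage_scale k * 2 ^ j <= n < stage_scale k * 2 ^ j + 2 ^ j.

Definition stage (k : nat) (n : nat) : Prop :=
  stage_start k < n <= 4 * stage_scale k \/ stage_blocks k n.

Definition sparse_set (n : nat) : Prop := n = 1 \/ exists k, stage k n.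

Lemma stage_scale_eq k : stage_scale k = 4 * stage_start k ^ 2.
Proof.
  destruct k as [|k]; [reflexivity|].
  unfold stage_scale at 1; cbn [stage_log stage_start]; unfold stage_scale.
  rewrite Nat.pow_add_r, (Nat.mul_comm 6), Nat.pow_mul_r. simpl. ring.
Qed.

Lemma stage_start_ge2 k : 2 <= stage_start k.
Proof.
  induction k as [|k IH]; [reflexivity|].
  cbn [stage_start]. rewrite stage_scale_eq. simpl. nia.
Qed.

Lemma stage_start_lt_scale k : stage_start k < stage_scale k.
Proof.
  pose proof (stage_start_ge2 k). rewrite stage_scale_eq, Nat.pow_2_r. nia.
Qed.

Lemma stage_start_lt_succ k : stage_start k < stage_start (S k).
Proof.
  pose proof (stage_start_ge2 k). pose proof (le_cube (stage_scale k)).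
  cbn [stage_start]. rewrite stage_scale_eq in *. rewrite Nat.pow_2_r in *. nia.
Qed.

Lemma stage_start_mono k k' : k <= k' -> stage_start k <= stage_start k'.
Proof.
  induction 1 as [|k' _ IH]; [lia|]. pose proof (stage_start_lt_succ k'). lia.
Qed.

Lemma stage_start_gt k : k < stage_start k.
Proof.
  induction k as [|k IH]; [cbn; lia|]. pose proof (stage_start_lt_succ k). lia.
Qed.

Section Stage.

Variable k : nat.

Let W := stage_start k.
Let K := stage_scale k.

Let HW : 2 <= W := stage_start_ge2 k.
Let HK : K = 4 * (W * W).
Proof. rewrite <- Nat.pow_2_r. exact (stage_scale_eq k). Qed.

Let HWK : W < K := stage_start_lt_scale k.

Lemma sparse_set_interval n : W < n <= 4 * K -> sparse_set n.
Proof. intros Hn. right. exists k. left. exact Hn. Qed.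

Lemma stage_cover_small t : W + 1 < t <= 4 * K + 1 -> prodsumset sparse_set t.
Proof.
  intros Ht. exists 1, (t - 1). repeat split.
  - exists 1, 1. repeat split; left; reflexivity.
  - apply sparse_set_interval. lia.
  - lia.
Qed.

Lemma stage_cover_squares t :
  W + (W + 1) * (W + 1) < t <= W + 2 * K * K -> prodsumset sparse_set t.
Proof.
  intros Ht.
  apply (interval_chain _ (fun d => W + (W + 1 + d) * (W + 1 + d))
           (fun d => W + 2 * (W + 1 + d) * (W + 1 + d)) (K - W - 1)).
  - intros d _. nia.
  - intros d t' Hd Ht'. set (m := W + 1 + d) in *.
    apply (prodsumset_block _ W m m); try lia.
    + intros; apply sparse_set_interval; lia.
    + intros b Hb Hbm. apply sparse_set_interval.
      assert (b - m < 1) by (apply (Nat.mul_lt_mono_pos_l m); lia). lia.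
    + intros; apply sparse_set_interval; lia.
  - rewrite Nat.add_0_r. replace (W + 1 + (K - W - 1)) with K by lia. lia.
Qed.

Lemma stage_cover_dyadic t :
  W + K * K < t <= W + 2 * K * K * K -> prodsumset sparse_set t.
Proof.
  intros Ht.
  apply (interval_chain _ (fun j => W + K * (K * 2 ^ j)) (fun j => W + 2 * K * (K * 2 ^ j))
           (stage_log k)).
  - intros j _. rewrite Nat.pow_succ_r'. lia.
  - intros j t' Hj Ht'. set (M := K * 2 ^ j) in *.
    assert (HM : K <= M) by (pose proof (Nat.pow_nonzero 2 j); unfold M; nia).
    apply (prodsumset_block _ W K M); try lia.
    + intros; apply sparse_set_interval; lia.
    + intros b Hb HbK. right. exists k. right. exists j. split; [exact Hj|].
      assert (b - M < 2 ^ j) by (apply (Nat.mul_lt_mono_pos_l K); lia).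
      fold K M. lia.
    + intros; apply sparse_set_interval; lia.
  - change (2 ^ stage_log k) with K.
    rewrite Nat.pow_0_r. lia.
Qed.

Lemma stage_cover t : W + 1 < t <= stage_start (S k) + 1 -> prodsumset sparse_set t.
Proof.
  intros Ht. cbn [stage_start] in Ht. fold K in Ht.
  replace (K ^ 3) with (K * K * K) in Ht by (cbn; lia).
  destruct (Nat.le_gt_cases t (4 * K + 1)); [apply stage_cover_small; lia|].
  destruct (Nat.le_gt_cases t (W + 2 * K * K)).
  - apply stage_cover_squares. nia.
  - apply stage_cover_dyadic. nia.
Qed.

End Stage.

Lemma prodsumset_sparse_set t : 3 < t -> prodsumset sparse_set t.
Proof.
  intros Ht.
  apply (interval_chain _ (fun k => stage_start k + 1) (fun k => stage_start (S k) + 1) t).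
  - lia.
  - intros k t' _. apply stage_cover.
  - pose proof (stage_start_gt (S t)). cbn [stage_start] in *. lia.
Qed.

Lemma stage_bounds k n : stage k n -> stage_start k < n <= stage_start (S k).
Proof.
  pose proof (stage_scale_eq k) as HK. pose proof (stage_start_ge2 k).
  rewrite Nat.pow_2_r in HK.
  cbn [stage_start]. set (K := stage_scale k) in *.
  replace (K ^ 3) with (K * K * K) by (cbn; lia).
  intros [Hn | [j [Hj Hn]]]; [nia|].
  assert (H2j : 2 ^ j <= K) by (apply Nat.pow_le_mono_r; lia).
  pose proof (Nat.pow_nonzero 2 j). nia.
Qed.

Lemma sparse_set_pos n : sparse_set n -> 1 <= n.
Proof.
  intros [-> | [k Hk]]; [lia|].
  pose proof (stage_bounds k n Hk). pose proof (stage_start_ge2 k). lia.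
Qed.

Lemma count_sparse_set k :
  count_upto sparse_set (stage_start (S k)) <= 6 * stage_scale k + 1.
Proof.
  set (W := stage_start k). set (K := stage_scale k).
  pose proof (stage_start_ge2 k) as HW. pose proof (stage_start_lt_scale k) as HWK.
  fold W in HW, HWK. fold K in HWK.
  eapply Nat.le_trans.
  { apply (count_upto_mono _ (fun n => (0 <= n < W + 1 \/ W + 1 <= n < 4 * K + 1) \/
                                       stage_blocks k n)).
    intros n Hn [-> | [k' Hk']]; [left; left; lia|].
    pose proof (stage_bounds k' n Hk').
    destruct (Nat.lt_trichotomy k' k) as [Hlt | [-> | Hgt]].
    - pose proof (stage_start_mono (S k') k Hlt). left; left; lia.
    - destruct Hk' as [Hk' | Hk']; [left; right; lia | right; exact Hk'].
    - pose proof (stage_start_mono (S k) k' Hgt). lia. }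
  eapply Nat.le_trans; [apply count_upto_union|].
  pose proof (count_upto_union (fun n => 0 <= n < W + 1) (fun n => W + 1 <= n < 4 * K + 1)
                (stage_start (S k))).
  pose proof (count_upto_interval 0 (W + 1) (stage_start (S k))).
  pose proof (count_upto_interval (W + 1) (4 * K + 1) (stage_start (S k))).
  pose proof (count_upto_dyadic_blocks (fun j => K * 2 ^ j) (stage_log k) (stage_start (S k))).
  change (2 ^ S (stage_log k)) with (2 * K) in *.
  unfold stage_blocks. fold K. lia.
Qed.

Open Scope R_scope.

Lemma Int_part_nat_bounds x : 0 <= x ->
  INR (Z.to_nat (Int_part x)) <= x < INR (Z.to_nat (Int_part x)) + 1.
Proof.
  intros Hx. destruct (base_Int_part x) as [Hle Hgt].
  assert (Hnn : (-1 < Int_part x)%Z) by (apply lt_IZR; lra).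
  rewrite INR_IZR_INZ, Z2Nat.id by lia. lra.
Qed.

Lemma counting_INR (S : nat -> Prop) n : counting S (INR n) = INR (count_upto S n).
Proof. unfold counting. rewrite Int_part_INR, Nat2Z.id. reflexivity. Qed.

Lemma has_density_one_cofinite (S : nat -> Prop) m :
  (forall n, (m < n)%nat -> S n) -> has_density_one S.
Proof.
  intros HS. apply is_lim_spec. intros eps. pose proof (cond_pos eps).
  exists (Rmax 1 ((INR m + 1) / eps)). intros x Hx.
  pose proof (Rmax_l 1 ((INR m + 1) / eps)). pose proof (Rmax_r 1 ((INR m + 1) / eps)).
  destruct (Int_part_nat_bounds x ltac:(lra)) as [Hfl Hfu].
  unfold counting. set (N := Z.to_nat (Int_part x)) in *.
  assert (Hc : INR N <= INR (count_upto S N) + INR m <= INR N + INR m).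
  { rewrite <- !plus_INR. split; apply le_INR.
    - apply count_upto_cofinite. intros n Hn. apply HS. lia.
    - pose proof (count_upto_le S N). lia. }
  assert (Hxe : INR m + 1 < eps * x).
  { apply (Rmult_lt_reg_r (/ eps)); [apply Rinv_0_lt_compat; lra|].
    replace (eps * x * / eps) with x by (field; lra). lra. }
  rewrite Rabs_left1.
  - apply (Rmult_lt_reg_r x); [lra|].
    replace (- (INR (count_upto S N) / x - 1) * x) with (x - INR (count_upto S N))
      by (field; lra). lra.
  - apply Rle_minus, (Rmult_le_reg_r x); [lra|].
    replace (INR (count_upto S N) / x * x) with (INR (count_upto S N)) by (field; lra). lra.
Qed.

Lemma Rpower_cube_root n : (0 < n)%nat -> Rpower (INR (n ^ 3)) (1 / 3) = INR n.
Proof.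
  intros Hn. apply lt_0_INR in Hn.
  rewrite pow_INR, <- Rpower_pow, Rpower_mult by exact Hn.
  replace (INR 3 * (1 / 3)) with 1 by (simpl; field). apply Rpower_1, Hn.
Qed.

Lemma div_cube_root_le (phi : R -> R) x c a :
  0 < phi 0 -> (forall x y, x <= y -> phi x <= phi y) -> 0 < x -> 0 <= a ->
  c <= a * Rpower x (1 / 3) ->
  c / Rpower (x * phi x) (1 / 3) <= a / Rpower (phi 0) (1 / 3).
Proof.
  intros Hphi0 Hmono Hx Ha Hc.
  assert (Hphi : phi 0 <= phi x) by (apply Hmono; lra).
  assert (Hr0 : 0 < Rpower (phi 0) (1 / 3)) by apply exp_pos.
  assert (Hr : Rpower (phi 0) (1 / 3) <= Rpower (phi x) (1 / 3))
    by (apply Rle_Rpower_l; lra).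
  assert (Hx3 : 0 < Rpower x (1 / 3)) by apply exp_pos.
  rewrite <- Rpower_mult_distr by lra.
  apply (Rle_trans _ (a / Rpower (phi x) (1 / 3))).
  - set (Px := Rpower x (1 / 3)) in *. set (Pphi := Rpower (phi x) (1 / 3)) in *.
    apply (Rmult_le_reg_r (Px * Pphi)); [apply Rmult_lt_0_compat; lra|].
    replace (c / (Px * Pphi) * (Px * Pphi)) with c by (field; lra).
    replace (a / Pphi * (Px * Pphi)) with (a * Px) by (field; lra). exact Hc.
  - apply Rmult_le_compat_l; [exact Ha|]. apply Rinv_le_contravar; lra.
Qed.

Theorem theorem1p3 (phi : R -> R)
  (phi_pos : forall x, 0 < phi x)
  (phi_incr : forall x y, x <= y -> phi x <= phi y)
  (phi_inf : is_lim phi p_infty p_infty) :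
  exists A : nat -> Prop,
    (forall n, A n -> (1 <= n)%nat) /\
    has_density_one (prodsumset A) /\
    exists C : R, forall X0 : R, exists X : R,
      X0 <= X /\ 0 < X /\
      counting A X / Rpower (X * phi X) (1/3) <= C.
Proof.
  exists sparse_set. split; [exact sparse_set_pos|]. split.
  { apply (has_density_one_cofinite _ 3). exact prodsumset_sparse_set. }
  exists (7 / Rpower (phi 0) (1 / 3)). intros X0.
  destruct (INR_unbounded X0) as [k Hk].
  set (K := stage_scale k).
  assert (HK : (0 < K)%nat) by (pose proof (stage_start_lt_scale k); lia).
  assert (HX : stage_start (S k) = (K ^ 3)%nat) by reflexivity.
  assert (HkX : (k < K ^ 3)%nat) by (pose proof (stage_start_gt (S k)); lia).
  assert (Hc : (count_upto sparse_set (K ^ 3) <= 7 * K)%nat)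
    by (pose proof (count_sparse_set k) as Hcount; rewrite HX in Hcount; fold K in Hcount; lia).
  exists (INR (K ^ 3)). repeat split.
  - apply Rlt_le, (Rlt_le_trans _ (INR k)); [lra | apply le_INR; lia].
  - apply lt_0_INR. lia.
  - rewrite counting_INR. apply div_cube_root_le; auto; [apply lt_0_INR; lia | lra |].
    rewrite Rpower_cube_root by exact HK.
    apply le_INR in Hc. rewrite mult_INR in Hc. simpl (INR 7) in Hc. lra.
Qed.
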